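(* Let $0<r_1<r_2<r_3$ satisfy \[ r_2(r_3-r_1)^3 - r_1(r_3+r_2)^3 - r_3(r_1+r_2)^3 \ \ge\ 0, \] and let $(i,j)\in\{(1,2),(2,3)\}$. For $\beta\in[0,\pi]$ let $\alpha(\beta)$ be the smallest solution $\alpha\in[\pi,2\pi]$ of $g_{13}(\beta)+g_{ij}(\alpha)=0$ (so $\alpha(0)=\alpha(\pi)=\pi$). Set \[\kappa=\frac{g_{13}'(0)}{-g_{ij}'(\pi)}=\frac{r_1r_3\,(r_i+r_j)^3}{r_ir_j\,(r_3-r_1)^3}.\] Then for every $\beta\in(0,\pi)$, \[ \pi\le\alpha(\beta)<\pi+\kappa\beta .\]
   Context: For $i,j\in\{1,2,3\}$ and $\theta\in\mathbb R$ set $D_{ij}(\theta)=r_i^2+r_j^2-2r_ir_j\cos\theta$ and $g_{ij}(\theta)=\dfrac{r_ir_j\sin\theta}{D_{ij}(\theta)^{3/2}}$. (By the comparison $g_{13}\le g_{ij}$ on $[0,\pi]$, the equation defining $\alpha(\beta)$ has a solution in $[\pi,2\pi]$, and $\kappa$ equals the derivative of $\alpha$ at $0$.) *)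

From Stdlib Require Import Reals.
Open Scope R_scope.

Definition Dfun (a b theta : R) : R := a ^ 2 + b ^ 2 - 2 * a * b * cos theta.

Definition gfun (a b theta : R) : R :=
  a * b * sin theta / Rpower (Dfun a b theta) (3 / 2).

Definition is_alpha (r1 r3 ri rj beta alpha : R) : Prop :=
  PI <= alpha <= 2 * PI /\
  gfun r1 r3 beta + gfun ri rj alpha = 0 /\
  (forall a, PI <= a < alpha -> gfun r1 r3 beta + gfun ri rj a <> 0).

(* kappa = g13'(0) / (- gij'(pi)) in closed form *)
Definition kappa (r1 r3 ri rj : R) : R :=
  r1 * r3 * (ri + rj) ^ 3 / (ri * rj * (r3 - r1) ^ 3).

From Stdlib Require Import Reals Lra Psatz.
Open Scope R_scope.

(* Write F(a) = g13(beta) + gij(a) and t = kappa * beta.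
   1. The hypothesis on r1 < r2 < r3 implies kappa <= 1 in both
      cases (i,j) = (1,2) and (2,3).
   2. F(pi) = g13(beta) > 0, since gij(pi) = 0.
   3. F(pi + t) < 0: using D13(beta) > (r3 - r1)^2, Dij(pi + t) <= (ri + rj)^2
      and the concavity bound kappa * sin beta <= sin (kappa * beta),
        g13(beta) < r1 r3 sin beta / (r3 - r1)^3
                  = kappa ri rj sin beta / (ri + rj)^3
                  <= ri rj sin t / (ri + rj)^3 <= - gij(pi + t).
   4. A continuous function that is positive at a and negative at b has a
      least zero in (a, b) (a supremum argument).  This least zero is an
      admissible alpha, and every admissible alpha is at most it, hence
      alpha < pi + kappa * beta. *)

Lemma continuity_pt_pos_near (f : R -> R) (z : R) :
  continuity_pt f z -> 0 < f z ->
  exists d, 0 < d /\ forall y, Rabs (y - z) < d -> 0 < f y.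
Proof.
  intros Hc Hfz. destruct (Hc (f z) Hfz) as [d [Hd Hnear]].
  exists d. split; [exact Hd|]. intros y Hy.
  destruct (Req_dec y z) as [->|Hyz]; [exact Hfz|].
  assert (Hdist : Rabs (f y - f z) < f z) by (apply (Hnear y); repeat split; auto).
  apply Rabs_def2 in Hdist. lra.
Qed.

(* A function continuous on [a, b], positive at a and negative at b, has a
   least zero in (a, b); it is the supremum of the points x such that f is
   positive on [a, x]. *)
Lemma least_zero (f : R -> R) (a b : R) :
  a < b -> (forall x, a <= x <= b -> continuity_pt f x) ->
  0 < f a -> f b < 0 ->
  exists z, a < z < b /\ f z = 0 /\ (forall y, a <= y < z -> 0 < f y).
Proof.
  intros Hab Hc Ha Hb.
  set (E := fun x => a <= x <= b /\ forall y, a <= y <= x -> 0 < f y).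
  assert (Ea : E a).
  { split; [lra|]. intros y Hy. replace y with a by lra. exact Ha. }
  assert (Ebound : bound E) by (exists b; intros x [Hx _]; lra).
  destruct (completeness E Ebound (ex_intro _ a Ea)) as [z [Hub Hlub]].
  assert (Hza : a <= z) by (apply Hub; exact Ea).
  assert (Hzb : z <= b) by (apply Hlub; intros x [Hx _]; lra).
  (* f is positive below z: a point y < z with f y <= 0 would bound E. *)
  assert (Hbelow : forall y, a <= y < z -> 0 < f y).
  { intros y Hy. destruct (Rle_dec (f y) 0) as [Hneg|Hpos]; [|lra].
    assert (Hyub : is_upper_bound E y).
    { intros x [Hx HxE]. destruct (Rle_dec x y) as [|Hxy]; [lra|].
      specialize (HxE y ltac:(lra)). lra. }
    specialize (Hlub y Hyub). lra. }
  assert (Hcz : continuity_pt f z) by (apply Hc; lra).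
  (* f z < 0 would make f negative slightly below z. *)
  assert (Hnotneg : ~ f z < 0).
  { intro Hneg.
    assert (Hcz' : continuity_pt (fun x => - f x) z) by (apply continuity_pt_opp; exact Hcz).
    destruct (continuity_pt_pos_near _ z Hcz' ltac:(lra)) as [d [Hd Hnear]].
    assert (Haz : a < z) by (destruct (Req_dec a z) as [<-|]; lra).
    set (y := Rmax a (z - d / 2)).
    assert (a <= y) by apply Rmax_l.
    assert (z - d / 2 <= y) by apply Rmax_r.
    assert (y < z) by (apply Rmax_lub_lt; lra).
    specialize (Hnear y ltac:(rewrite Rabs_left; lra)).
    specialize (Hbelow y ltac:(lra)). lra. }
  (* f z > 0 would put a point slightly above z into E. *)
  assert (Hnotpos : ~ 0 < f z).
  { intro Hpos. destruct (continuity_pt_pos_near f z Hcz Hpos) as [d [Hd Hnear]].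
    assert (Hzb' : z < b) by (destruct (Req_dec z b) as [->|]; lra).
    set (x := Rmin b (z + d / 2)).
    assert (x <= b) by apply Rmin_l.
    assert (x <= z + d / 2) by apply Rmin_r.
    assert (z < x) by (apply Rmin_glb_lt; lra).
    assert (Ex : E x).
    { split; [lra|]. intros y Hy. destruct (Rlt_dec y z); [apply Hbelow; lra|].
      apply Hnear. rewrite Rabs_right; lra. }
    specialize (Hub x Ex). lra. }
  assert (Hfz : f z = 0) by lra.
  exists z. split; [|split; [exact Hfz | exact Hbelow]].
  split; [destruct (Req_dec a z) as [<-|]|destruct (Req_dec z b) as [->|]]; lra.
Qed.

(* Concavity of sin on [0, pi]: shrinking the argument by k <= 1 loses at
   most the factor k.  By the mean value theorem, since cos is decreasing. *)
Lemma sin_scaled_ge (k b : R) :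
  0 < k <= 1 -> 0 <= b <= PI -> k * sin b <= sin (k * b).
Proof.
  intros Hk Hb. destruct (Req_dec b 0) as [->|Hb0].
  { rewrite Rmult_0_r, sin_0. lra. }
  set (phi := fun x => sin (k * x) - k * sin x).
  destruct (MVT_cor2 phi (fun x => k * cos (k * x) - k * cos x) 0 b ltac:(lra))
    as [c [Hphi Hc]].
  { intros c _. unfold phi. apply derivable_pt_lim_minus.
    - replace (k * cos (k * c)) with (cos (k * c) * (k * 1)) by ring.
      apply (derivable_pt_lim_comp (fun x => k * x) sin).
      + apply derivable_pt_lim_scal, derivable_pt_lim_id.
      + apply derivable_pt_lim_sin.
    - apply derivable_pt_lim_scal, derivable_pt_lim_sin. }
  unfold phi in Hphi. rewrite Rmult_0_r, sin_0 in Hphi.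
  assert (Hcos : cos c <= cos (k * c)) by (apply cos_decr_1; nra).
  assert (0 <= (k * cos (k * c) - k * cos c) * (b - 0)) by (apply Rmult_le_pos; nra).
  lra.
Qed.

Lemma Rpower_sqr_three_halves (r : R) : 0 < r -> Rpower (r ^ 2) (3 / 2) = r ^ 3.
Proof.
  intro Hr. rewrite <- (Rpower_pow 2 r Hr), Rpower_mult, <- (Rpower_pow 3 r Hr).
  f_equal. simpl. field.
Qed.

Lemma Dfun_pos (a b t : R) : 0 < a -> 0 < b -> a <> b -> 0 < Dfun a b t.
Proof.
  intros Ha Hb Hab. unfold Dfun. pose proof (COS_bound t).
  assert (0 < (a - b) ^ 2) by (assert (a - b <> 0) by lra; nra).
  assert (0 <= a * b * (1 - cos t)) by (apply Rmult_le_pos; nra). nra.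
Qed.

Lemma Dfun_gt_min (a b beta : R) :
  0 < a -> 0 < b -> 0 < beta < PI -> (b - a) ^ 2 < Dfun a b beta.
Proof.
  intros Ha Hb Hbeta. unfold Dfun.
  assert (Hcos : cos beta < cos 0) by (apply cos_decreasing_1; lra).
  rewrite cos_0 in Hcos.
  assert (0 < a * b * (1 - cos beta)) by (apply Rmult_lt_0_compat; nra). nra.
Qed.

Lemma Dfun_le_max (a b t : R) : 0 < a -> 0 < b -> Dfun a b t <= (a + b) ^ 2.
Proof.
  intros Ha Hb. unfold Dfun. pose proof (COS_bound t).
  assert (0 <= a * b * (1 + cos t)) by (apply Rmult_le_pos; nra). nra.
Qed.

Lemma gfun_PI (a b : R) : gfun a b PI = 0.
Proof. unfold gfun. rewrite sin_PI, Rmult_0_r. unfold Rdiv. apply Rmult_0_l. Qed.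

Lemma gfun_pos (a b beta : R) :
  0 < a -> 0 < b -> a <> b -> 0 < beta < PI -> 0 < gfun a b beta.
Proof.
  intros Ha Hb Hab Hbeta. unfold gfun, Rdiv, Rpower.
  assert (0 < sin beta) by (apply sin_gt_0; lra).
  apply Rmult_lt_0_compat; [apply Rmult_lt_0_compat; nra|].
  apply Rinv_0_lt_compat, exp_pos.
Qed.

Lemma gfun_continuous (a b x : R) :
  0 < a -> 0 < b -> a <> b -> continuity_pt (gfun a b) x.
Proof.
  intros Ha Hb Hab. unfold gfun.
  assert (HD : continuity_pt (Dfun a b) x).
  { unfold Dfun. apply continuity_pt_minus; [apply continuity_pt_const; now intros ? ?|].
    apply continuity_pt_mult; [apply continuity_pt_const; now intros ? ?|].
    apply continuity_cos. }
  pose proof (Dfun_pos a b x Ha Hb Hab) as HDpos.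
  apply (continuity_pt_div (fun t => a * b * sin t) (fun t => Rpower (Dfun a b t) (3 / 2))).
  - apply continuity_pt_mult; [apply continuity_pt_const; now intros ? ?|].
    apply continuity_sin.
  - apply (continuity_pt_comp (Dfun a b) (fun y => Rpower y (3 / 2))); [exact HD|].
    apply derivable_continuous_pt. eexists. apply derivable_pt_lim_power. exact HDpos.
  - unfold Rpower. apply Rgt_not_eq, exp_pos.
Qed.

(* Upper bound for g near its zero at 0, from D > (b - a)^2. *)
Lemma gfun_lt_bound (a b beta : R) :
  0 < a -> a < b -> 0 < beta < PI ->
  gfun a b beta < a * b * sin beta / (b - a) ^ 3.
Proof.
  intros Ha Hab Hbeta. unfold gfun, Rdiv.
  assert (0 < sin beta) by (apply sin_gt_0; lra).
  assert (Hcube : 0 < (b - a) ^ 3) by (apply pow_lt; lra).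
  assert (Hpow : (b - a) ^ 3 < Rpower (Dfun a b beta) (3 / 2)).
  { rewrite <- Rpower_sqr_three_halves by lra.
    apply Rlt_Rpower_l; [lra|]. split; [apply pow_lt; lra|].
    apply Dfun_gt_min; lra. }
  apply Rmult_lt_compat_l; [apply Rmult_lt_0_compat; nra|].
  apply Rinv_lt_contravar; [apply Rmult_lt_0_compat|]; lra.
Qed.

(* Lower bound for -g just past pi, from D <= (a + b)^2. *)
Lemma gfun_opposite_ge (a b t : R) :
  0 < a -> 0 < b -> a <> b -> 0 <= sin t ->
  a * b * sin t / (a + b) ^ 3 <= - gfun a b (PI + t).
Proof.
  intros Ha Hb Hab Hsin. unfold gfun.
  rewrite (Rplus_comm PI t), neg_sin.
  pose proof (Dfun_pos a b (t + PI) Ha Hb Hab) as HD.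
  assert (Hpow : Rpower (Dfun a b (t + PI)) (3 / 2) <= (a + b) ^ 3).
  { rewrite <- Rpower_sqr_three_halves by lra.
    apply Rle_Rpower_l; [lra|]. split; [exact HD|]. apply Dfun_le_max; lra. }
  assert (Hpos : 0 < Rpower (Dfun a b (t + PI)) (3 / 2)) by (unfold Rpower; apply exp_pos).
  set (P := Rpower (Dfun a b (t + PI)) (3 / 2)) in *.
  replace (- (a * b * - sin t / P)) with (a * b * sin t / P) by (unfold Rdiv; ring).
  unfold Rdiv. apply Rmult_le_compat_l; [apply Rmult_le_pos; nra|].
  apply Rinv_le_contravar; assumption.
Qed.

Lemma kappa_pos (r1 r3 ri rj : R) :
  0 < r1 -> r1 < r3 -> 0 < ri -> 0 < rj -> 0 < kappa r1 r3 ri rj.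
Proof.
  intros H1 H13 Hi Hj. unfold kappa, Rdiv.
  apply Rmult_lt_0_compat; [apply Rmult_lt_0_compat; [nra | apply pow_lt; lra]|].
  apply Rinv_0_lt_compat, Rmult_lt_0_compat; [nra | apply pow_lt; lra].
Qed.

Lemma sign_at_kappa_beta (r1 r3 ri rj beta : R) :
  0 < r1 -> r1 < r3 -> 0 < ri -> ri < rj -> kappa r1 r3 ri rj <= 1 ->
  0 < beta < PI ->
  gfun r1 r3 beta + gfun ri rj (PI + kappa r1 r3 ri rj * beta) < 0.
Proof.
  intros H1 H13 Hi Hij HK Hbeta.
  set (K := kappa r1 r3 ri rj) in *.
  assert (Hcij : 0 < (ri + rj) ^ 3) by (apply pow_lt; lra).
  assert (HK0 : 0 < K) by (apply kappa_pos; lra).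
  assert (Hsin : K * sin beta <= sin (K * beta)) by (apply sin_scaled_ge; lra).
  assert (Hsin0 : 0 < sin beta) by (apply sin_gt_0; lra).
  (* the two linear approximations at 0 and pi differ exactly by kappa *)
  assert (Hslope : r1 * r3 * sin beta / (r3 - r1) ^ 3
                   = K * (ri * rj * sin beta / (ri + rj) ^ 3)).
  { unfold K, kappa. field. lra. }
  assert (Hscale : K * (ri * rj * sin beta / (ri + rj) ^ 3)
                   <= ri * rj * sin (K * beta) / (ri + rj) ^ 3).
  { unfold Rdiv. replace (K * (ri * rj * sin beta * / (ri + rj) ^ 3))
      with (ri * rj * / (ri + rj) ^ 3 * (K * sin beta)) by ring.
    replace (ri * rj * sin (K * beta) * / (ri + rj) ^ 3)
      with (ri * rj * / (ri + rj) ^ 3 * sin (K * beta)) by ring.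
    apply Rmult_le_compat_l; [|exact Hsin].
    apply Rmult_le_pos; [nra | apply Rlt_le, Rinv_0_lt_compat; exact Hcij]. }
  pose proof (gfun_lt_bound r1 r3 beta H1 H13 Hbeta).
  pose proof (gfun_opposite_ge ri rj (K * beta) Hi ltac:(lra) ltac:(lra) ltac:(nra)).
  lra.
Qed.

Lemma alpha_exists_and_bounded (r1 r3 ri rj beta : R) :
  0 < r1 -> r1 < r3 -> 0 < ri -> ri < rj -> kappa r1 r3 ri rj <= 1 ->
  0 < beta < PI ->
  (exists alpha, is_alpha r1 r3 ri rj beta alpha) /\
  (forall alpha, is_alpha r1 r3 ri rj beta alpha ->
     PI <= alpha < PI + kappa r1 r3 ri rj * beta).
Proof.
  intros H1 H13 Hi Hij HK Hbeta.
  set (F := fun a => gfun r1 r3 beta + gfun ri rj a).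
  assert (Ht : 0 < kappa r1 r3 ri rj * beta)
    by (apply Rmult_lt_0_compat; [apply kappa_pos |]; lra).
  assert (HFPI : 0 < F PI).
  { unfold F. rewrite gfun_PI, Rplus_0_r. apply gfun_pos; lra. }
  assert (HFend : F (PI + kappa r1 r3 ri rj * beta) < 0)
    by (apply sign_at_kappa_beta; assumption).
  destruct (least_zero F PI (PI + kappa r1 r3 ri rj * beta)) as [z [Hz [Hfz Hmin]]];
    [lra | | exact HFPI | exact HFend |].
  { intros u _. apply continuity_pt_plus; [apply continuity_pt_const; now intros ? ?|].
    apply gfun_continuous; lra. }
  assert (HzPI : z <= 2 * PI) by nra.
  split.
  - exists z. repeat split; try lra; [exact Hfz|].
    intros a Ha. specialize (Hmin a Ha). unfold F in Hmin. lra.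
  - (* an admissible alpha cannot lie beyond the zero z *)
    intros alpha [Halpha [_ Hfirst]]. split; [lra|].
    destruct (Rlt_dec z alpha) as [Hza|]; [|lra].
    exfalso. apply (Hfirst z); [lra | exact Hfz].
Qed.

Lemma kappa_le_one (r1 r2 r3 ri rj : R) :
  0 < r1 -> r1 < r2 -> r2 < r3 ->
  r2 * (r3 - r1) ^ 3 - r1 * (r3 + r2) ^ 3 - r3 * (r1 + r2) ^ 3 >= 0 ->
  ((ri, rj) = (r1, r2) \/ (ri, rj) = (r2, r3)) ->
  kappa r1 r3 ri rj <= 1.
Proof.
  intros H1 H12 H23 Hcond Hcase.
  assert (P1 : 0 <= r1 * (r3 + r2) ^ 3) by (apply Rmult_le_pos; [lra | apply pow_le; lra]).
  assert (P2 : 0 <= r3 * (r1 + r2) ^ 3) by (apply Rmult_le_pos; [lra | apply pow_le; lra]).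
  assert (Hc : 0 < (r3 - r1) ^ 3) by (apply pow_lt; lra).
  assert (Hnum : r1 * r3 * (ri + rj) ^ 3 <= ri * rj * (r3 - r1) ^ 3).
  { destruct Hcase as [He | He]; injection He as -> ->.
    - replace (r1 * r3 * (r1 + r2) ^ 3) with (r1 * (r3 * (r1 + r2) ^ 3)) by ring.
      replace (r1 * r2 * (r3 - r1) ^ 3) with (r1 * (r2 * (r3 - r1) ^ 3)) by ring.
      apply Rmult_le_compat_l; lra.
    - replace (r1 * r3 * (r2 + r3) ^ 3) with (r3 * (r1 * (r3 + r2) ^ 3)) by ring.
      replace (r2 * r3 * (r3 - r1) ^ 3) with (r3 * (r2 * (r3 - r1) ^ 3)) by ring.
      apply Rmult_le_compat_l; lra. }
  assert (Hden : 0 < ri * rj * (r3 - r1) ^ 3).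
  { destruct Hcase as [He | He]; injection He as -> ->;
      apply Rmult_lt_0_compat; nra. }
  unfold kappa, Rdiv. rewrite <- (Rinv_r (ri * rj * (r3 - r1) ^ 3)) by lra.
  apply Rmult_le_compat_r; [apply Rlt_le, Rinv_0_lt_compat |]; assumption.
Qed.

Theorem lemma2p5 (r1 r2 r3 ri rj : R) :
  0 < r1 -> r1 < r2 -> r2 < r3 ->
  r2 * (r3 - r1) ^ 3 - r1 * (r3 + r2) ^ 3 - r3 * (r1 + r2) ^ 3 >= 0 ->
  ((ri, rj) = (r1, r2) \/ (ri, rj) = (r2, r3)) ->
  forall beta, 0 < beta < PI ->
    (exists alpha, is_alpha r1 r3 ri rj beta alpha) /\
    (forall alpha, is_alpha r1 r3 ri rj beta alpha ->
       PI <= alpha < PI + kappa r1 r3 ri rj * beta).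
Proof.
  intros H1 H12 H23 Hcond Hcase beta Hbeta.
  pose proof (kappa_le_one r1 r2 r3 ri rj H1 H12 H23 Hcond Hcase) as HK.
  assert (Hpair : 0 < ri /\ ri < rj)
    by (destruct Hcase as [He | He]; injection He as -> ->; lra).
  apply alpha_exists_and_bounded; lra.
Qed.
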